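(* Let $\mathcal T$ be a theory of $\mathsf{LGI}$, let $\alpha,\beta$ be basic expressions and $c,d\in[0,1]$. If every element of $\tau(\alpha,c)$ and every element of $\tau(\beta,d)$ is provable from $\mathcal T$ in $\mathsf{LGI}$, then so is every element of each of the sets $\tau(\alpha\land\beta,\min(c,d))$, $\tau(\alpha\lor\beta,\max(c,d))$, $\tau(\alpha\odot\beta,c\odot d)$ and $\tau(\sim\alpha,1-c)$.
   Context: Fix a continuous t-norm $\odot$ on $[0,1]$ and let $c\oplus d = 1-((1-c)\odot(1-d))$. Write $c\odot_{\L} d=\max(c+d-1,0)$, $c\oplus_{\L} d=\min(c+d,1)$. Syntax of $\mathsf{LGI}$: countably many variables $\phi_0,\phi_1,\dots$ and constants $\bot,\top$. Basic expressions are built from variables and constants by binary $\land,\lor,\odot$ and unary $\sim$. A graded implication is written $\alpha\Rightarrow_c\beta$ with $\alpha,\beta$ basic expressions, $c\in[0,1]$. Formulas are built from graded implications by classical $\land,\lor,\lnot$; $\Phi\to\Psi$ abbreviates $\lnot\Phi\lor\Psi$. A theory is a set of formulas. For a basic expression $\alpha$ and $c\in[0,1]$, $\tau(\alpha,c)=\{\top\Rightarrow_t\alpha : t\in[0,1],\ t<c\}\cup\{\alpha\Rightarrow_{1-t}\bot : t\in[0,1],\ t>c\}$. Calculus $\mathsf{LGI}$: axioms are (i) all substitution instances (by graded implications) of classical propositional tautologies; (ii) for all basic expressions $\alpha,\beta,\gamma$ and $c,d\in[0,1]$: ($\land_1$) $(\alpha\Rightarrow_d\beta)\land(\alpha\Rightarrow_d\gamma)\to(\alpha\Rightarrow_d\beta\land\gamma)$;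 ($\land_2$) $\alpha\land\beta\Rightarrow_1\alpha$; ($\land_3$) $\alpha\land\beta\Rightarrow_1\beta$; ($\lor_1$) $(\alpha\Rightarrow_d\gamma)\land(\beta\Rightarrow_d\gamma)\to(\alpha\lor\beta\Rightarrow_d\gamma)$; ($\lor_2$) $\alpha\Rightarrow_1\alpha\lor\beta$; ($\lor_3$) $\beta\Rightarrow_1\alpha\lor\beta$; ($\odot_1$) $(\top\Rightarrow_c\alpha)\land(\top\Rightarrow_d\beta)\to(\top\Rightarrow_{c\odot d}\alpha\odot\beta)$; ($\odot_2$) $(\alpha\Rightarrow_c\bot)\land(\beta\Rightarrow_d\bot)\to(\alpha\odot\beta\Rightarrow_{c\oplus d}\bot)$; ($\odot_3$) $\top\Rightarrow_1\top\odot\top$; ($\sim_1$) $(\alpha\Rightarrow_d\beta)\to(\sim\beta\Rightarrow_d\sim\alpha)$; ($\sim_2$) $\sim\sim\alpha\Rightarrow_1\alpha$; ($\sim_3$) $\alpha\Rightarrow_1\sim\sim\alpha$; ($\top$) $\alpha\Rightarrow_1\top$; ($\bot$) $\bot\Rightarrow_1\alpha$; (0) $\alpha\Rightarrow_0\beta$; ($c$) $\alpha\Rightarrow_c\alpha$; (inkons) $\lnot(\top\Rightarrow_c\bot)$ for $c>0$; (trans$_1$) $(\alpha\Rightarrow_c\beta)\land(\beta\Rightarrow_d\gamma)\to(\alpha\Rightarrow_{c\odot_{\L}d}\gamma)$; (trans$_2$) $(\alpha\Rightarrow_c\bot)\land(\top\Rightarrow_d\beta)\to(\alpha\Rightarrow_{c\oplus_{\L}d}\beta)$;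 (lin$_1$) $(\alpha\Rightarrow_1\beta)\lor(\beta\Rightarrow_1\alpha)$; (lin$_2$) $(\top\Rightarrow_d\alpha)\lor(\alpha\Rightarrow_{1-d}\bot)$. The only rule is modus ponens. $\mathcal T\vdash_{\mathsf{LGI}}\Phi$ means $\Phi$ has a finite derivation from axioms and elements of $\mathcal T$ by modus ponens. *)

From Stdlib Require Import Reals Lra.
Open Scope R_scope.

Record I01 : Type := mkI01 {
  ival : R;
  ival_ge0 : 0 <= ival;
  ival_le1 : ival <= 1 }.

Record ctnorm : Type := mkCtnorm {
  tn : R -> R -> R;
  tn_range : forall x y, 0 <= x <= 1 -> 0 <= y <= 1 -> 0 <= tn x y <= 1;
  tn_comm : forall x y, 0 <= x <= 1 -> 0 <= y <= 1 -> tn x y = tn y x;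
  tn_assoc : forall x y z, 0 <= x <= 1 -> 0 <= y <= 1 -> 0 <= z <= 1 ->
      tn x (tn y z) = tn (tn x y) z;
  tn_mono : forall x x' y, 0 <= x <= 1 -> 0 <= x' <= 1 -> 0 <= y <= 1 ->
      x <= x' -> tn x y <= tn x' y;
  tn_unit : forall x, 0 <= x <= 1 -> tn x 1 = x;
  tn_cont : forall x y, 0 <= x <= 1 -> 0 <= y <= 1 ->
      forall eps, 0 < eps -> exists delta, 0 < delta /\
        forall x' y', 0 <= x' <= 1 -> 0 <= y' <= 1 ->
          Rabs (x - x') < delta -> Rabs (y - y') < delta ->
          Rabs (tn x y - tn x' y') < eps }.

Lemma ival_rng (c : I01) : 0 <= ival c <= 1.
Proof. destruct c; simpl; lra. Qed.

Definition I01_0 : I01 := mkI01 0 (Rle_refl 0) (Rle_0_1).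
Definition I01_1 : I01 := mkI01 1 (Rle_0_1) (Rle_refl 1).

Definition I01_compl (c : I01) : I01.
Proof. refine (mkI01 (1 - ival c) _ _); destruct c; simpl; lra. Defined.

Definition I01_min (c d : I01) : I01.
Proof.
  refine (mkI01 (Rmin (ival c) (ival d)) _ _); destruct c, d; simpl;
  unfold Rmin; destruct Rle_dec; lra.
Defined.

Definition I01_max (c d : I01) : I01.
Proof.
  refine (mkI01 (Rmax (ival c) (ival d)) _ _); destruct c, d; simpl;
  unfold Rmax; destruct Rle_dec; lra.
Defined.

Definition I01_tn (T : ctnorm) (c d : I01) : I01.
Proof.
  refine (mkI01 (tn T (ival c) (ival d)) _ _);
  pose proof (tn_range T (ival c) (ival d) (ival_rng c) (ival_rng d)); lra.
Defined.

Definition I01_tc (T : ctnorm) (c d : I01) : I01 :=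
  I01_compl (I01_tn T (I01_compl c) (I01_compl d)).

Definition I01_luk_and (c d : I01) : I01.
Proof.
  refine (mkI01 (Rmax (ival c + ival d - 1) 0) _ _);
  pose proof (ival_rng c); pose proof (ival_rng d);
  unfold Rmax; destruct Rle_dec; lra.
Defined.

Definition I01_luk_or (c d : I01) : I01.
Proof.
  refine (mkI01 (Rmin (ival c + ival d) 1) _ _);
  pose proof (ival_rng c); pose proof (ival_rng d);
  unfold Rmin; destruct Rle_dec; lra.
Defined.

Inductive bexp : Type :=
| BVar : nat -> bexp
| BBot : bexp
| BTop : bexp
| BAnd : bexp -> bexp -> bexp
| BOr : bexp -> bexp -> bexp
| BOdot : bexp -> bexp -> bexp
| BNeg : bexp -> bexp.

Inductive form : Type :=
| GI : bexp -> I01 -> bexp -> form     (* GI a c b  =  a ⇒_c b *)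
| FAnd : form -> form -> form
| FOr : form -> form -> form
| FNot : form -> form.

Definition FImp (P Q : form) : form := FOr (FNot P) Q.

Inductive pform : Type :=
| PVar : nat -> pform
| PAnd : pform -> pform -> pform
| POr : pform -> pform -> pform
| PNot : pform -> pform.

Fixpoint peval (v : nat -> bool) (p : pform) : bool :=
  match p with
  | PVar n => v n
  | PAnd p q => andb (peval v p) (peval v q)
  | POr p q => orb (peval v p) (peval v q)
  | PNot p => negb (peval v p)
  end.

Definition tautology (p : pform) : Prop := forall v, peval v p = true.

Fixpoint psubst (s : nat -> form) (p : pform) : form :=
  match p with
  | PVar n => s n
  | PAnd p q => FAnd (psubst s p) (psubst s q)
  | POr p q => FOr (psubst s p) (psubst s q)
  | PNot p => FNot (psubst s p)
  end.

Inductive LGI_prov (Tn : ctnorm) (Th : form -> Prop) : form -> Prop :=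
| ax_taut : forall p s, tautology p -> LGI_prov Tn Th (psubst s p)
| ax_and1 : forall a b g d,
    LGI_prov Tn Th (FImp (FAnd (GI a d b) (GI a d g)) (GI a d (BAnd b g)))
| ax_and2 : forall a b, LGI_prov Tn Th (GI (BAnd a b) I01_1 a)
| ax_and3 : forall a b, LGI_prov Tn Th (GI (BAnd a b) I01_1 b)
| ax_or1 : forall a b g d,
    LGI_prov Tn Th (FImp (FAnd (GI a d g) (GI b d g)) (GI (BOr a b) d g))
| ax_or2 : forall a b, LGI_prov Tn Th (GI a I01_1 (BOr a b))
| ax_or3 : forall a b, LGI_prov Tn Th (GI b I01_1 (BOr a b))
| ax_odot1 : forall a b c d,
    LGI_prov Tn Th (FImp (FAnd (GI BTop c a) (GI BTop d b))
                         (GI BTop (I01_tn Tn c d) (BOdot a b)))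
| ax_odot2 : forall a b c d,
    LGI_prov Tn Th (FImp (FAnd (GI a c BBot) (GI b d BBot))
                         (GI (BOdot a b) (I01_tc Tn c d) BBot))
| ax_odot3 : LGI_prov Tn Th (GI BTop I01_1 (BOdot BTop BTop))
| ax_neg1 : forall a b d,
    LGI_prov Tn Th (FImp (GI a d b) (GI (BNeg b) d (BNeg a)))
| ax_neg2 : forall a, LGI_prov Tn Th (GI (BNeg (BNeg a)) I01_1 a)
| ax_neg3 : forall a, LGI_prov Tn Th (GI a I01_1 (BNeg (BNeg a)))
| ax_top : forall a, LGI_prov Tn Th (GI a I01_1 BTop)
| ax_bot : forall a, LGI_prov Tn Th (GI BBot I01_1 a)
| ax_zero : forall a b, LGI_prov Tn Th (GI a I01_0 b)
| ax_refl : forall a c, LGI_prov Tn Th (GI a c a)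
| ax_inkons : forall c, 0 < ival c -> LGI_prov Tn Th (FNot (GI BTop c BBot))
| ax_trans1 : forall a b g c d,
    LGI_prov Tn Th (FImp (FAnd (GI a c b) (GI b d g)) (GI a (I01_luk_and c d) g))
| ax_trans2 : forall a b c d,
    LGI_prov Tn Th (FImp (FAnd (GI a c BBot) (GI BTop d b)) (GI a (I01_luk_or c d) b))
| ax_lin1 : forall a b, LGI_prov Tn Th (FOr (GI a I01_1 b) (GI b I01_1 a))
| ax_lin2 : forall a d,
    LGI_prov Tn Th (FOr (GI BTop d a) (GI a (I01_compl d) BBot))
| in_theory : forall P, Th P -> LGI_prov Tn Th P
| mp : forall P Q, LGI_prov Tn Th P -> LGI_prov Tn Th (FImp P Q) -> LGI_prov Tn Th Q.

Definition tau (a : bexp) (c : I01) (P : form) : Prop :=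
  (exists t : I01, ival t < ival c /\ P = GI BTop t a) \/
  (exists t : I01, ival t > ival c /\ P = GI a (I01_compl t) BBot).

(* For [⊙] the strict bounds required
   by τ are reached through continuity of the t-norm: a strict bound on [c ⊙ d] is already
   met by [c' ⊙ d'] for [c'], [d'] strictly on the same side of [c], [d]. *)

From Stdlib Require Import Reals.
From Stdlib Require Import Lra ProofIrrelevance.

Lemma I01_eq (x y : I01) : ival x = ival y -> x = y.
Proof. destruct x, y; simpl; intros ->; f_equal; apply proof_irrelevance. Qed.

Lemma tn_0l (Tn : ctnorm) (y : R) : 0 <= y <= 1 -> tn Tn 0 y = 0.
Proof.
  intros Hy.
  assert (H0 : 0 <= 0 <= 1) by lra. assert (H1 : 0 <= 1 <= 1) by lra.
  pose proof (tn_range Tn 0 y H0 Hy).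
  pose proof (tn_mono Tn y 1 0 Hy H1 H0 (proj2 Hy)) as Hle.
  rewrite (tn_comm Tn 1 0 H1 H0), (tn_unit Tn 0 H0), <- (tn_comm Tn 0 y H0 Hy) in Hle.
  lra.
Qed.

Lemma tn_approx_below (Tn : ctnorm) (c d t : I01) :
  ival t < tn Tn (ival c) (ival d) ->
  exists c' d' : I01, ival c' < ival c /\ ival d' < ival d /\
    ival t <= tn Tn (ival c') (ival d').
Proof.
  intros Ht.
  pose proof (ival_rng c) as Rc; pose proof (ival_rng d) as Rd; pose proof (ival_rng t).
  assert (c_pos : 0 < ival c).
  { destruct (Req_dec (ival c) 0) as [E|]; [|lra].
    rewrite E, tn_0l in Ht by lra; lra. }
  assert (d_pos : 0 < ival d).
  { destruct (Req_dec (ival d) 0) as [E|]; [|lra].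
    rewrite (tn_comm Tn _ _ Rc Rd), E, tn_0l in Ht by lra; lra. }
  destruct (tn_cont Tn _ _ Rc Rd (tn Tn (ival c) (ival d) - ival t)) as [del [Hdel Hcont]];
    [lra|].
  set (m := Rmin del (Rmin (ival c) (ival d))).
  assert (Hm : 0 < m /\ m <= del /\ m <= ival c /\ m <= ival d).
  { unfold m, Rmin; repeat destruct Rle_dec; lra. }
  assert (Hc' : 0 <= ival c - m/2 <= 1) by lra.
  assert (Hd' : 0 <= ival d - m/2 <= 1) by lra.
  exists (mkI01 _ (proj1 Hc') (proj2 Hc')), (mkI01 _ (proj1 Hd') (proj2 Hd')); simpl.
  assert (Hr := Hcont _ _ Hc' Hd' ltac:(apply Rabs_def1; lra) ltac:(apply Rabs_def1; lra)).
  apply Rabs_def2 in Hr; lra.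
Qed.

(* Above [c ⊙ d] one cannot always move [c] strictly up, since [c] may be [1]. *)
Lemma tn_approx_above (Tn : ctnorm) (c d t : I01) :
  tn Tn (ival c) (ival d) < ival t ->
  exists c' d' : I01, (ival c < ival c' \/ ival c' = 1) /\
    (ival d < ival d' \/ ival d' = 1) /\ tn Tn (ival c') (ival d') <= ival t.
Proof.
  intros Ht.
  pose proof (ival_rng c) as Rc; pose proof (ival_rng d) as Rd.
  destruct (tn_cont Tn _ _ Rc Rd (ival t - tn Tn (ival c) (ival d))) as [del [Hdel Hcont]];
    [lra|].
  assert (Hup : forall x, 0 <= x <= 1 ->
    0 <= Rmin (x + del/2) 1 <= 1 /\ x <= Rmin (x + del/2) 1 /\
    Rmin (x + del/2) 1 - x < del /\ (x < Rmin (x + del/2) 1 \/ Rmin (x + del/2) 1 = 1)).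
  { intros x Hx; unfold Rmin; destruct Rle_dec; lra. }
  destruct (Hup _ Rc) as (Hc' & Hc1 & Hc2 & Hc3).
  destruct (Hup _ Rd) as (Hd' & Hd1 & Hd2 & Hd3).
  exists (mkI01 _ (proj1 Hc') (proj2 Hc')), (mkI01 _ (proj1 Hd') (proj2 Hd')); simpl.
  repeat split; try assumption.
  assert (Hr := Hcont _ _ Hc' Hd' ltac:(apply Rabs_def1; lra) ltac:(apply Rabs_def1; lra)).
  apply Rabs_def2 in Hr; lra.
Qed.

Section Derivations.

Variable Tn : ctnorm.
Variable Th : form -> Prop.

Notation prov := (LGI_prov Tn Th).

Lemma prov_FAnd P Q : prov P -> prov Q -> prov (FAnd P Q).
Proof.
  intros HP HQ.
  set (p := POr (PNot (PVar 0)) (POr (PNot (PVar 1)) (PAnd (PVar 0) (PVar 1)))).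
  assert (Hp : tautology p) by (intro v; simpl; destruct (v 0%nat), (v 1%nat); reflexivity).
  pose (s := fun n : nat => match n with 0 => P | _ => Q end).
  exact (mp _ _ _ _ HQ (mp _ _ _ _ HP (ax_taut Tn Th p s Hp))).
Qed.

Lemma mp2 P Q S : prov P -> prov Q -> prov (FImp (FAnd P Q) S) -> prov S.
Proof. intros HP HQ H; exact (mp _ _ _ _ (prov_FAnd _ _ HP HQ) H). Qed.

Lemma GI_ival_eq a x y b : prov (GI a x b) -> ival y = ival x -> prov (GI a y b).
Proof. intros H E; rewrite (I01_eq y x E); exact H. Qed.

Lemma GI_trans a b g x y z : prov (GI a x b) -> prov (GI b y g) ->
  ival z = ival x + ival y - 1 -> prov (GI a z g).
Proof.
  intros H1 H2 E.
  apply (GI_ival_eq _ _ _ _ (mp2 _ _ _ H1 H2 (ax_trans1 Tn Th a b g x y))); simpl.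
  pose proof (ival_rng z); rewrite Rmax_left; lra.
Qed.

(* Compose with [a ⇒_{1-x+y} a]. *)
Lemma GI_weaken a x y b : prov (GI a x b) -> ival y <= ival x -> prov (GI a y b).
Proof.
  intros H L.
  pose proof (ival_rng x); pose proof (ival_rng y).
  assert (Hr : 0 <= 1 - ival x + ival y <= 1) by lra.
  apply (GI_trans _ _ _ x (mkI01 _ (proj1 Hr) (proj2 Hr)) y H (ax_refl _ _ _ _)); simpl; lra.
Qed.

Lemma GI_top_negbot : prov (GI BTop I01_1 (BNeg BBot)).
Proof.
  apply (GI_trans _ (BNeg (BNeg BTop)) _ I01_1 I01_1 _ (ax_neg3 _ _ _)
           (mp _ _ _ _ (ax_bot _ _ (BNeg BTop)) (ax_neg1 _ _ _ _ _))); simpl; lra.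
Qed.

Lemma GI_negtop_bot : prov (GI (BNeg BTop) I01_1 BBot).
Proof.
  apply (GI_trans _ (BNeg (BNeg BBot)) _ I01_1 I01_1 _
           (mp _ _ _ _ (ax_top _ _ (BNeg BBot)) (ax_neg1 _ _ _ _ _)) (ax_neg2 _ _ _)); simpl; lra.
Qed.

Definition tau_prov (a : bexp) (c : I01) : Prop := forall P, tau a c P -> prov P.

Lemma tau_provP a c :
  (forall t : I01, ival t < ival c -> prov (GI BTop t a)) ->
  (forall t : I01, ival c < ival t -> prov (GI a (I01_compl t) BBot)) ->
  tau_prov a c.
Proof. intros Htop Hbot P [[t [Ht ->]] | [t [Ht ->]]]; auto. Qed.

Lemma tau_prov_top a c t : tau_prov a c -> ival t < ival c -> prov (GI BTop t a).
Proof. intros H Ht; apply H; left; exists t; auto. Qed.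

Lemma tau_prov_bot a c t : tau_prov a c -> ival c < ival t \/ ival t = 1 ->
  prov (GI a (I01_compl t) BBot).
Proof.
  intros H [Ht | Ht].
  - apply H; right; exists t; auto.
  - apply (GI_ival_eq _ I01_0); [apply ax_zero | simpl; lra].
Qed.

Lemma tau_prov_and a b c d : tau_prov a c -> tau_prov b d ->
  tau_prov (BAnd a b) (I01_min c d).
Proof.
  intros Ha Hb; apply tau_provP; simpl; intros t Ht; pose proof (ival_rng t).
  - apply (mp2 _ _ _ (tau_prov_top _ _ t Ha ltac:(unfold Rmin in Ht; destruct Rle_dec; lra))
                     (tau_prov_top _ _ t Hb ltac:(unfold Rmin in Ht; destruct Rle_dec; lra))
                     (ax_and1 _ _ _ _ _ _)).
  - unfold Rmin in Ht; destruct Rle_dec.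
    + apply (GI_trans _ _ _ I01_1 (I01_compl t) _ (ax_and2 _ _ _ _)
               (tau_prov_bot _ _ t Ha ltac:(lra))); simpl; lra.
    + apply (GI_trans _ _ _ I01_1 (I01_compl t) _ (ax_and3 _ _ _ _)
               (tau_prov_bot _ _ t Hb ltac:(lra))); simpl; lra.
Qed.

Lemma tau_prov_or a b c d : tau_prov a c -> tau_prov b d ->
  tau_prov (BOr a b) (I01_max c d).
Proof.
  intros Ha Hb; apply tau_provP; simpl; intros t Ht; pose proof (ival_rng t).
  - unfold Rmax in Ht; destruct Rle_dec.
    + apply (GI_trans _ _ _ t I01_1 _ (tau_prov_top _ _ t Hb ltac:(lra)) (ax_or3 _ _ _ _));
        simpl; lra.
    + apply (GI_trans _ _ _ t I01_1 _ (tau_prov_top _ _ t Ha ltac:(lra)) (ax_or2 _ _ _ _));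
        simpl; lra.
  - apply (mp2 _ _ _ (tau_prov_bot _ _ t Ha ltac:(unfold Rmax in Ht; destruct Rle_dec; lra))
                     (tau_prov_bot _ _ t Hb ltac:(unfold Rmax in Ht; destruct Rle_dec; lra))
                     (ax_or1 _ _ _ _ _ _)).
Qed.

Lemma tau_prov_odot a b c d : tau_prov a c -> tau_prov b d ->
  tau_prov (BOdot a b) (I01_tn Tn c d).
Proof.
  intros Ha Hb; apply tau_provP; simpl; intros t Ht.
  - destruct (tn_approx_below Tn c d t Ht) as (c' & d' & Hc & Hd & Hle).
    apply (GI_weaken _ (I01_tn Tn c' d')); [|exact Hle].
    exact (mp2 _ _ _ (tau_prov_top _ _ _ Ha Hc) (tau_prov_top _ _ _ Hb Hd) (ax_odot1 _ _ _ _ _ _)).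
  - destruct (tn_approx_above Tn c d t Ht) as (c' & d' & Hc & Hd & Hle).
    apply (GI_weaken _ (I01_tc Tn (I01_compl c') (I01_compl d'))).
    + exact (mp2 _ _ _ (tau_prov_bot _ _ _ Ha Hc) (tau_prov_bot _ _ _ Hb Hd)
               (ax_odot2 _ _ _ _ _ _)).
    + simpl; replace (1 - (1 - ival c')) with (ival c') by ring;
        replace (1 - (1 - ival d')) with (ival d') by ring; lra.
Qed.

(* [∼] is order-reversing, so [⊤ ⇒ ∼α] comes from [α ⇒ ⊥] via [⊤ ⇒_1 ∼⊥], and dually. *)
Lemma tau_prov_neg a c : tau_prov a c -> tau_prov (BNeg a) (I01_compl c).
Proof.
  intros Ha; apply tau_provP; simpl; intros t Ht; pose proof (ival_rng t).
  - pose proof (tau_prov_bot _ _ (I01_compl t) Ha ltac:(left; simpl; lra)) as Hbot.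
    apply (GI_trans _ _ _ _ _ _ GI_top_negbot (mp _ _ _ _ Hbot (ax_neg1 _ _ _ _ _)));
      simpl; lra.
  - pose proof (tau_prov_top _ _ (I01_compl t) Ha ltac:(simpl; lra)) as Htop.
    apply (GI_trans _ _ _ _ _ _ (mp _ _ _ _ Htop (ax_neg1 _ _ _ _ _)) GI_negtop_bot);
      simpl; lra.
Qed.

End Derivations.

Theorem mainTheorem3 (Tn : ctnorm) (Th : form -> Prop) (a b : bexp) (c d : I01) :
  (forall P, tau a c P -> LGI_prov Tn Th P) ->
  (forall P, tau b d P -> LGI_prov Tn Th P) ->
  (forall P, tau (BAnd a b) (I01_min c d) P -> LGI_prov Tn Th P) /\
  (forall P, tau (BOr a b) (I01_max c d) P -> LGI_prov Tn Th P) /\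
  (forall P, tau (BOdot a b) (I01_tn Tn c d) P -> LGI_prov Tn Th P) /\
  (forall P, tau (BNeg a) (I01_compl c) P -> LGI_prov Tn Th P).
Proof.
  intros Ha Hb; repeat split.
  - exact (tau_prov_and Tn Th a b c d Ha Hb).
  - exact (tau_prov_or Tn Th a b c d Ha Hb).
  - exact (tau_prov_odot Tn Th a b c d Ha Hb).
  - exact (tau_prov_neg Tn Th a c Ha).
Qed.
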